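(* Let $n\ge1$ and $m\ge2$. The group $G_{n,m}$ generated by $s_0,\dots,s_m$ is a quotient of the affine Weyl group $\tilde C_m$.
   Context: The Yoke graph $Y_{n,m}$ has vertices the tuples $v=(v_0,\dots,v_{m+1})$ with $v_0,v_{m+1}\in\mathbb{Z}_n$, $v_1,\dots,v_m\in\{0,1\}$, $\sum v_i\equiv0\pmod n$ (bucket entries mod $n$). For $0\le i\le m$, $\overleftarrow{s}_i(v)$ replaces $v_i,v_{i+1}$ by $v_i+1,v_{i+1}-1$ and $\overrightarrow{s}_i(v)$ replaces them by $v_i-1,v_{i+1}+1$. Define permutations of the vertex set: $s_0(v)=\overleftarrow{s}_0(v)$ if $v_1=1$, $=\overrightarrow{s}_0(v)$ if $v_1=0$; $s_m(v)=\overleftarrow{s}_m(v)$ if $v_m=0$, $=\overrightarrow{s}_m(v)$ if $v_m=1$; for $1\le i\le m-1$, $s_i$ swaps entries $v_i,v_{i+1}$. $G_{n,m}$ is the subgroup of the symmetric group on the vertex set generated by $s_0,\dots,s_m$. The affine Weyl group $\tilde C_m$ is the group with generators $\sigma_0,\dots,\sigma_m$ and relations $\sigma_i^2=1$, $(\sigma_i\sigma_j)^2=1$ for $|i-j|>1$, $(\sigma_i\sigma_{i+1})^3=1$ for $1\le i\le m-2$, $(\sigma_0\sigma_1)^4=(\sigma_{m-1}\sigma_m)^4=1$. *)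

From HB Require Import structures.
From mathcomp Require Import all_boot all_fingroup.
From mathcomp Require Import zify.

Set Implicit Arguments.
Unset Strict Implicit.
Unset Printing Implicit Defensive.

Section Yoke.
Variables n m : nat.

(* a vertex (v_0, v_1..v_m, v_{m+1}); the bits v_1..v_m are stored 0-based *)
Definition raw := ('I_n * {ffun 'I_m -> bool} * 'I_n)%type.

Definition bitsum (b : {ffun 'I_m -> bool}) : nat := \sum_(j < m) (b j : nat).

Definition zero_sum (x : raw) : bool :=
  let: (a, b, c) := x in (a + bitsum b + c) %% n == 0.

Definition vertex := {x : raw | zero_sum x}.

Lemma ord_gt0 (a : 'I_n) : 0 < n.
Proof. by case: a => k /= /(leq_ltn_trans (leq0n k)). Qed.

Definition addm (a : 'I_n) (k : nat) : 'I_n :=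
  Ordinal (ltn_pmod (a + k) (ord_gt0 a)).
Definition inc (a : 'I_n) := addm a 1.
Definition dec (a : 'I_n) := addm a n.-1.

(* bit at 0-based position k (i.e. v_{k+1}) *)
Definition bitn (b : {ffun 'I_m -> bool}) (k : nat) : bool :=
  [exists j : 'I_m, (j == k :> nat) && b j].
Definition tog (k : nat) (b : {ffun 'I_m -> bool}) : {ffun 'I_m -> bool} :=
  [ffun j : 'I_m => if j == k :> nat then ~~ b j else b j].
(* exchange of the 0-based positions i-1 and i, i.e. of v_i and v_{i+1} *)
Definition sw (i : nat) (j : 'I_m) : 'I_m :=
  insubd j (if j == i.-1 :> nat then i else if j == i :> nat then i.-1 else nat_of_ord j).
Definition swapb (i : nat) (b : {ffun 'I_m -> bool}) : {ffun 'I_m -> bool} :=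
  [ffun j => b (sw i j)].

(* s_0 : v_1 = 1 -> (v_0+1, v_1-1) ; v_1 = 0 -> (v_0-1, v_1+1) *)
Definition s0raw (x : raw) : raw :=
  if m == 0 then x else
  let: (a, b, c) := x in
  if bitn b 0 then (inc a, tog 0 b, c) else (dec a, tog 0 b, c).
(* s_m : v_m = 0 -> (v_m+1, v_{m+1}-1) ; v_m = 1 -> (v_m-1, v_{m+1}+1) *)
Definition smraw (x : raw) : raw :=
  if m == 0 then x else
  let: (a, b, c) := x in
  if bitn b m.-1 then (a, tog m.-1 b, inc c) else (a, tog m.-1 b, dec c).
Definition smidraw (i : nat) (x : raw) : raw :=
  let: (a, b, c) := x in (a, swapb i b, c).

Definition sraw (i : 'I_m.+1) (x : raw) : raw :=
  if i == 0 :> nat then s0raw x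
  else if i == m :> nat then smraw x
  else smidraw i x.

Lemma bitn_ord (b : {ffun 'I_m -> bool}) (j : 'I_m) : bitn b j = b j.
Proof.
apply/existsP/idP => [[k /andP[/eqP/val_inj -> //]]|bj].
by exists j; rewrite eqxx.
Qed.

Lemma tog_sum k b (hk : k < m) :
  bitsum (tog k b) + bitn b k = bitsum b + ~~ bitn b k.
Proof.
rewrite /bitsum (bigD1 (Ordinal hk)) //= [in RHS](bigD1 (Ordinal hk)) //=.
rewrite ffunE eqxx -[k]/(nat_of_ord (Ordinal hk)) bitn_ord.
rewrite (eq_bigr (fun j => (b j : nat))); last first.
  by move=> j hj; rewrite ffunE; case: eqP => // hjk; case/eqP: hj; apply: val_inj.
by rewrite addnC addnA [RHS]addnAC.
Qed.

Lemma tog_tog k b : tog k (tog k b) = b.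
Proof. by apply/ffunP => j; rewrite !ffunE; case: eqP => //; rewrite negbK. Qed.

Lemma bitn_tog k b (hk : k < m) : bitn (tog k b) k = ~~ bitn b k.
Proof.
by rewrite -[k]/(nat_of_ord (Ordinal hk)) !bitn_ord ffunE eqxx.
Qed.

Lemma val_sw i (j : 'I_m) (hi : 0 < i < m) :
  nat_of_ord (sw i j) =
  (if j == i.-1 :> nat then i else if j == i :> nat then i.-1 else nat_of_ord j).
Proof.
case/andP: hi => hi0 him.
have hi1 : i.-1 < m by rewrite (leq_ltn_trans (leq_pred i)).
rewrite /sw insubdK // unfold_in /=.
by case: ifP => // _; case: ifP.
Qed.

Lemma sw_inv i (hi : 0 < i < m) : involutive (sw i).
Proof.
move=> j; apply: ord_inj; rewrite !val_sw //.
case/andP: hi => hi0 him.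
have hne : (i.-1 == i) = false by case: (i) hi0 => //= k _; rewrite eqn_leq ltnn andbF.
case: (eqVneq (nat_of_ord j) i.-1) => [->|h1]; first by rewrite eqxx [i == _]eq_sym hne.
case: (eqVneq (nat_of_ord j) i) => [->|h2]; first by rewrite eqxx.
by rewrite (negbTE h1) (negbTE h2).
Qed.

Lemma swapb_sum i b (hi : 0 < i < m) : bitsum (swapb i b) = bitsum b.
Proof.
rewrite /bitsum (reindex_inj (inv_inj (sw_inv hi))) /=.
by apply: eq_bigr => j _; rewrite ffunE sw_inv.
Qed.

Lemma swapb_inv i b (hi : 0 < i < m) : swapb i (swapb i b) = b.
Proof. by apply/ffunP => j; rewrite !ffunE sw_inv. Qed.

Lemma inc_dec (a : 'I_n) : inc (dec a) = a.
Proof.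
apply: val_inj => /=; rewrite modnDml -addnA addn1 prednK ?(ord_gt0 a) //.
by rewrite modnDr modn_small.
Qed.

Lemma dec_inc (a : 'I_n) : dec (inc a) = a.
Proof.
apply: val_inj => /=; rewrite modnDml -addnA add1n prednK ?(ord_gt0 a) //.
by rewrite modnDr modn_small.
Qed.

Lemma sraw_inv i : involutive (sraw i).
Proof.
move=> [[a b] c]; rewrite /sraw.
have [hi0|hi0] := eqVneq (nat_of_ord i) 0.
  rewrite /s0raw; case: eqP => // /eqP hm; have hm0 : 0 < m by rewrite lt0n.
  by case hb: (bitn b 0); rewrite bitn_tog // hb /= tog_tog ?dec_inc ?inc_dec.

have [him|him] := eqVneq (nat_of_ord i) m.
  rewrite /smraw; case: eqP => // /eqP hm.
  have hm0 : m.-1 < m by rewrite prednK ?lt0n.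
  by case hb: (bitn b m.-1); rewrite bitn_tog // hb /= tog_tog ?dec_inc ?inc_dec.

have hi : 0 < i < m by rewrite lt0n hi0 ltn_neqAle him -ltnS ltn_ord.
by rewrite /smidraw swapb_inv.
Qed.

Lemma sraw_pres i x : zero_sum x -> zero_sum (sraw i x).
Proof.
case: x => [[a b] c]; rewrite /sraw /zero_sum => /eqP hx.
have n0 := ord_gt0 a.
have [hi0|hi0] := eqVneq (nat_of_ord i) 0.
  rewrite /s0raw; case: eqP => [_|/eqP hm]; first by apply/eqP.
  have hm0 : 0 < m by rewrite lt0n.
  have := tog_sum b hm0; case hb: (bitn b 0) => /= hs; apply/eqP;
    rewrite -!addnA modnDml !addnA.
    by have -> : a + 1 + bitsum (tog 0 b) + c = a + bitsum b + c by lia.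
  have -> : a + n.-1 + bitsum (tog 0 b) + c = a + bitsum b + c + n by lia.
  by rewrite modnDr.
have [him|him] := eqVneq (nat_of_ord i) m.
  rewrite /smraw; case: eqP => [_|/eqP hm]; first by apply/eqP.
  have hm0 : m.-1 < m by rewrite prednK ?lt0n.
  have := tog_sum b hm0; case hb: (bitn b m.-1) => /= hs; apply/eqP;
    rewrite modnDmr.
    by have -> : a + bitsum (tog m.-1 b) + (c + 1) = a + bitsum b + c by lia.
  have -> : a + bitsum (tog m.-1 b) + (c + n.-1) = a + bitsum b + c + n by lia.
  by rewrite modnDr.
have hi : 0 < i < m by rewrite lt0n hi0 ltn_neqAle him -ltnS ltn_ord.
by rewrite /smidraw swapb_sum // hx.
Qed.

Definition sV (i : 'I_m.+1) (v : vertex) : vertex :=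
  Sub (sraw i (val v)) (sraw_pres i (valP v)).

Lemma sV_inv i : involutive (sV i).
Proof. by move=> v; apply: val_inj; rewrite /= sraw_inv. Qed.

Definition s (i : 'I_m.+1) : {perm vertex} := perm (inv_inj (sV_inv i)).

Definition G : {group {perm vertex}} := <<[set s i | i : 'I_m.+1]>>%G.

(* Since sigma_i^2 = 1 is a relation, the group is the monoid of words in
   0..m modulo the congruence generated by the relators. *)
Definition alt (i j : 'I_m.+1) (k : nat) : seq 'I_m.+1 :=
  flatten (nseq k [:: i; j]).

Definition cox_relator (w : seq 'I_m.+1) : Prop :=
  (exists i, w = [:: i; i]) \/
  [\/ (exists i j : 'I_m.+1, (i.+1 < j \/ j.+1 < i) /\ w = alt i j 2),
      (exists i j : 'I_m.+1, [/\ 1 <= i, i <= m - 2, nat_of_ord j = i.+1 & w = alt i j 3]),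
      (exists i j : 'I_m.+1, [/\ nat_of_ord i = 0, nat_of_ord j = 1 & w = alt i j 4])
    | (exists i j : 'I_m.+1, [/\ nat_of_ord i = m - 1, nat_of_ord j = m & w = alt i j 4])].

Inductive cox_equiv : seq 'I_m.+1 -> seq 'I_m.+1 -> Prop :=
| cox_rel x r y : cox_relator r -> cox_equiv (x ++ r ++ y) (x ++ y)
| cox_refl w : cox_equiv w w
| cox_sym u v : cox_equiv u v -> cox_equiv v u
| cox_trans u v w : cox_equiv u v -> cox_equiv v w -> cox_equiv u w.

End Yoke.

From mathcomp Require Import all_boot all_fingroup.
From mathcomp Require Import zify.

(* The words in the s_i define a homomorphism from the free monoid onto G_{n,m},
   so it suffices that every defining relator of ~C_m acts trivially on the
   vertices.  Each s_i is an involution; generators at distance at least 2 act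
   on disjoint coordinates; neighbouring middle generators are adjacent
   transpositions of the bits; and s_1 s_0 acts on (v_1, v_2) as the rotation
   (p, q) |-> (q, ~~ p) of order 4, during which v_0 is moved by +-1 according
   to the bits p, q, ~~ p, ~~ q, for a net displacement of 0.  The relator at
   the other end is the same computation, after a cyclic rotation. *)

Definition swapn (i k : nat) : nat :=
  if k == i.-1 then i else if k == i then i.-1 else k.

Ltac eqn_cases :=
  repeat match goal with |- context[?x == ?y] =>
    lazymatch x with context[if _ then _ else _] => fail | _ => idtac end;
    lazymatch y with context[if _ then _ else _] => fail | _ => idtac end;
    case: (x =P y) => ? end.

Lemma swapnK i : involutive (swapn i).
Proof. by move=> k; rewrite /swapn; eqn_cases; lia. Qed.

Lemma swapn_id i k : k != i.-1 -> k != i -> swapn i k = k.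
Proof. by rewrite /swapn => /negbTE-> /negbTE->. Qed.

Lemma swapnC i j k : i.+1 < j -> swapn i (swapn j k) = swapn j (swapn i k).
Proof. by rewrite /swapn => ?; eqn_cases; lia. Qed.

Lemma swapn_braid i k : 0 < i ->
  swapn i (swapn i.+1 (swapn i (swapn i.+1 (swapn i (swapn i.+1 k))))) = k.
Proof. by rewrite /swapn => ?; eqn_cases; lia. Qed.

Section Bits.
Variable m : nat.
Implicit Types b : {ffun 'I_m -> bool}.

Lemma bitn_ge b k : m <= k -> bitn b k = false.
Proof.
by move=> le_mk; apply/existsP => -[j /andP[/eqP jk _]]; move: (ltn_ord j); lia.
Qed.

Lemma bitn_inj b b' : bitn b =1 bitn b' -> b = b'.
Proof. by move=> eq_bb'; apply/ffunP => j; rewrite -!bitn_ord. Qed.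

Lemma bitn_togE b k j : k < m -> bitn (tog k b) j = (j == k) (+) bitn b j.
Proof.
move=> lt_km; have [lt_jm|le_mj] := ltnP j m.
  by rewrite -[j]/(nat_of_ord (Ordinal lt_jm)) !bitn_ord ffunE; case: eqP.
by rewrite !bitn_ge //; case: eqP => // jk; move: lt_km; lia.
Qed.

Lemma bitn_swapb b i j : 0 < i < m -> bitn (swapb i b) j = bitn b (swapn i j).
Proof.
move=> lt0im; have [lt_jm|le_mj] := ltnP j m.
  by rewrite -[j]/(nat_of_ord (Ordinal lt_jm)) bitn_ord ffunE -bitn_ord val_sw.
by rewrite swapn_id ?bitn_ge //; apply/eqP; lia.
Qed.

Lemma togC b k l : tog k (tog l b) = tog l (tog k b).
Proof. by apply/ffunP => j; rewrite !ffunE; case: eqP; case: eqP. Qed.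

Lemma swapb_togC b i k : 0 < i < m -> k < m -> swapn i k = k ->
  swapb i (tog k b) = tog k (swapb i b).
Proof.
move=> lt0im lt_km fix_k; apply: bitn_inj => j.
by rewrite bitn_swapb // !bitn_togE // bitn_swapb // (inv_eq (swapnK i)) fix_k.
Qed.

End Bits.

Definition shift {n} (p : bool) (a : 'I_n) : 'I_n := if p then inc a else dec a.

Section TogSwap.
Variables (n m i k : nat).
Hypotheses (i_gt0 : 0 < i) (i_lt_m : i < m) (k_adj : (k == i.-1) || (k == i)).

Definition togswap (b : {ffun 'I_m -> bool}) := swapb i (tog k b).

Let lt0im : 0 < i < m. Proof. exact/andP. Qed.
Let k_lt_m : k < m. Proof. by move: k_adj; lia. Qed.

Lemma bitn_togswap_k b : bitn (togswap b) k = bitn b (swapn i k).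
Proof.
rewrite /togswap bitn_swapb // bitn_togE //.
by rewrite /swapn; move: k_adj; eqn_cases; lia.
Qed.

Lemma bitn_togswap_l b : bitn (togswap b) (swapn i k) = ~~ bitn b k.
Proof. by rewrite /togswap bitn_swapb // swapnK bitn_tog. Qed.

Lemma bitn_togswap_other b j : j != k -> j != swapn i k ->
  bitn (togswap b) j = bitn b j.
Proof.
move=> jk jl; rewrite /togswap bitn_swapb // bitn_togE //.
have -> : swapn i j = j.
  by apply: swapn_id; move: k_adj jk jl; rewrite /swapn; eqn_cases; lia.
by rewrite (negbTE jk).
Qed.

Lemma togswap_order4 b : togswap (togswap (togswap (togswap b))) = b.
Proof.
apply: bitn_inj => j.
have [->|jk] := eqVneq j k; last have [->|jl] := eqVneq j (swapn i k).
- by rewrite !(bitn_togswap_k, bitn_togswap_l) negbK.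
- by rewrite !(bitn_togswap_k, bitn_togswap_l) negbK.
- by rewrite !bitn_togswap_other.
Qed.

Lemma shift_togswap4 (b : {ffun 'I_m -> bool}) (x : 'I_n) :
  shift (bitn (togswap (togswap (togswap b))) k)
    (shift (bitn (togswap (togswap b)) k)
      (shift (bitn (togswap b) k) (shift (bitn b k) x))) = x.
Proof.
rewrite !(bitn_togswap_k, bitn_togswap_l).
by case: (bitn b k); case: (bitn b _); rewrite /shift ?dec_inc ?inc_dec.
Qed.

End TogSwap.

Section Action.
Variables n m : nat.
Implicit Types (i j : 'I_m.+1) (a c : 'I_n) (b : {ffun 'I_m -> bool}).
Implicit Type x : raw n m.

Definition act (w : seq 'I_m.+1) x : raw n m := foldl (fun y i => sraw i y) x w.

Lemma act_rcons w i x : act (rcons w i) x = sraw i (act w x).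
Proof. by rewrite /act -cats1 foldl_cat. Qed.

Lemma rcons_alt i j k : rcons (alt i j k) i = i :: alt j i k.
Proof. by elim: k => //= k ->. Qed.

Lemma act_alt_sym i j k : (forall x, act (alt j i k) x = x) ->
  forall x, act (alt i j k) x = x.
Proof.
move=> alt_ji x; rewrite -[act _ x](@sraw_inv n m i) -act_rcons rcons_alt /=.
by rewrite alt_ji sraw_inv.
Qed.

Hypothesis m_gt1 : 1 < m.

Let m_gt0 : 0 < m. Proof. exact: ltnW. Qed.

Lemma sraw_first i a b c : i = 0 :> nat ->
  sraw i (a, b, c) = (shift (bitn b 0) a, tog 0 b, c).
Proof.
by rewrite /sraw => ->; rewrite eqxx /s0raw gtn_eqF //; case: (bitn b 0).
Qed.

Lemma sraw_last i a b c : i = m :> nat ->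
  sraw i (a, b, c) = (a, tog m.-1 b, shift (bitn b m.-1) c).
Proof.
rewrite /sraw => ->; rewrite gtn_eqF // eqxx /smraw gtn_eqF //.
by case: (bitn b m.-1).
Qed.

Lemma sraw_mid i a b c : 0 < i < m -> sraw i (a, b, c) = (a, swapb i b, c).
Proof. by rewrite /sraw => /andP[i_gt0 i_lt]; rewrite gtn_eqF // ltn_eqF. Qed.

Lemma sraw_comm i j x : i.+1 < j -> sraw i (sraw j x) = sraw j (sraw i x).
Proof.
move=> far; case: x => [[a b] c]; have j_le_m : j <= m := ltn_ord j.
have [i0|i_gt0] := posnP i; have [jm|j_ne_m] := eqVneq (nat_of_ord j) m.
- have m1_gt0 : 0 < m.-1 by lia.
  rewrite !(sraw_first i, sraw_last j) // togC !bitn_togE ?ltn_predL //.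
  by rewrite (gtn_eqF m1_gt0) (ltn_eqF m1_gt0).
- have fix0 : swapn j 0 = 0 by apply: swapn_id; lia.
  by rewrite !(sraw_first i, sraw_mid j) ?bitn_swapb ?fix0 ?swapb_togC //; lia.
- have fix_m1 : swapn i m.-1 = m.-1 by apply: swapn_id; lia.
  by rewrite !(sraw_mid i, sraw_last j) ?bitn_swapb ?fix_m1 ?swapb_togC //; lia.
- rewrite !(sraw_mid i, sraw_mid j); try lia.
  congr (_, _, _); apply: bitn_inj => k.
  by rewrite !bitn_swapb ?(swapnC _ _ _ far) //; lia.
Qed.

Lemma act_alt_comm i j x : i.+1 < j -> act (alt i j 2) x = x.
Proof. by move=> far; rewrite /= -(sraw_comm _ _ _ far) !sraw_inv. Qed.

Lemma act_alt_braid i j x : 0 < i -> j = i.+1 :> nat -> j < m ->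
  act (alt i j 3) x = x.
Proof.
move=> i_gt0 ji j_lt; case: x => [[a b] c].
rewrite /= !(sraw_mid i, sraw_mid j); try lia.
congr (_, _, _); apply: bitn_inj => k.
by rewrite !bitn_swapb ?ji ?swapn_braid //; lia.
Qed.

Lemma act_alt_first i j x : i = 0 :> nat -> j = 1 :> nat -> act (alt i j 4) x = x.
Proof.
move=> i0 j1; case: x => [[a b] c].
have round a' b' c' :
    sraw j (sraw i (a', b', c')) = (shift (bitn b' 0) a', togswap m 1 0 b', c').
  by rewrite sraw_first // sraw_mid j1.
by rewrite /= !round shift_togswap4 ?togswap_order4.
Qed.

Lemma act_alt_last i j x : i = m - 1 :> nat -> j = m :> nat ->
  act (alt i j 4) x = x.
Proof.
move=> i_m1 jm; apply: act_alt_sym => {x} -[[a b] c].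
have round a' b' c' : sraw i (sraw j (a', b', c')) =
    (a', togswap m m.-1 m.-1 b', shift (bitn b' m.-1) c').
  by rewrite sraw_last // sraw_mid i_m1 ?subn1 //; lia.
by rewrite /= !round shift_togswap4 ?togswap_order4 ?eqxx ?orbT //; lia.
Qed.

Lemma act_relator r x : cox_relator r -> act r x = x.
Proof.
case=> [[i ->]|[[i [j [far ->]]]|[i [j [i_gt0 i_le ji ->]]]|[i [j [i0 j1 ->]]]|
               [i [j [i_m1 jm ->]]]]].
- by rewrite /= sraw_inv.
- by case: far => far; [|apply: act_alt_sym => {}x]; apply: act_alt_comm.
- by apply: act_alt_braid => //; lia.
- exact: act_alt_first.
- exact: act_alt_last.
Qed.

End Action.

Lemma prod_s_val n m (w : seq 'I_m.+1) (v : vertex n m) :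
  val ((\prod_(i <- w) @s n m i)%g v) = act n m w (val v).
Proof.
elim: w v => [|i w IH] v /=; first by rewrite big_nil perm1.
by rewrite big_cons permM IH /s permE.
Qed.

Lemma prod_s_relator n m r : 1 < m -> cox_relator r ->
  (\prod_(i <- r) @s n m i)%g = 1%g.
Proof.
move=> m_gt1 rel; apply/permP => v; rewrite perm1; apply: val_inj.
by rewrite prod_s_val act_relator.
Qed.

Section Presentation.
Variable gT : finGroupType.
Local Open Scope group_scope.

Lemma prod_cox_equiv m (f : 'I_m.+1 -> gT) :
  (forall r, cox_relator r -> \prod_(i <- r) f i = 1) ->
  forall u v, cox_equiv u v -> \prod_(i <- u) f i = \prod_(i <- v) f i.
Proof.
move=> rel1 u v; elim=> {u v} [x r y /rel1 r1|w|u v _ ->|u v w _ -> _ ->] //.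
by rewrite !big_cat r1 Monoid.mul1m.
Qed.

Lemma prod_mem_gen (I : finType) (f : I -> gT) (w : seq I) :
  \prod_(i <- w) f i \in <<[set f i | i : I]>>.
Proof. by apply: group_prod => i _; apply/mem_gen/imset_f. Qed.

Lemma gen_imset_prod (I : finType) (f : I -> gT) g :
  g \in <<[set f i | i : I]>> -> exists w : seq I, \prod_(i <- w) f i = g.
Proof.
case/gen_prodgP => k [c c_f ->].
have pick_gen j : exists i, c j == f i.
  by case/imsetP: (c_f j) => i _ ->; exists i.
exists [seq xchoose (pick_gen j) | j <- index_enum 'I_k].
rewrite big_map; apply: eq_bigr => j _.
by apply/esym/eqP; exact: (xchooseP (pick_gen j)).
Qed.

End Presentation.

Theorem corollary3p16 (n m : nat) : 1 <= n -> 2 <= m ->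
  exists f : seq 'I_m.+1 -> {perm vertex n m},
    [/\ (forall u v, f (u ++ v) = (f u * f v)%g),
        (forall u v, cox_equiv u v -> f u = f v),
        (forall w, f w \in G n m) &
        (forall g, g \in G n m -> exists w, f w = g)].
Proof.
move=> _ m_gt1; exists (fun w => \prod_(i <- w) @s n m i)%g; split.
- by move=> u v; rewrite big_cat.
- by apply: prod_cox_equiv => r; apply: prod_s_relator.
- by move=> w; apply: prod_mem_gen.
- by move=> g; apply: gen_imset_prod.
Qed.
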